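(* Let $n\ge1$ and let $c:E_n\to\mathbb C$ be an admissible edge weighting of $Q_n$ with $c(ij)\ne0$ for all edges $ij\in E_n$. Then there is $\mathbf t=[t_0,\dots,t_{n-1}]\in\Delta_{n-1}$ such that $|c(ij)|=\sqrt{t_k}$ for all edges $ij\in E_n$ with $i = j\#k$.
   Context: For $n\ge1$, identify integers $0\le i<2^n$ with their $n$-digit binary representations; $i\#k$ is $i$ with its $k$-th digit flipped. The hypercube $Q_n$ has vertex classes $U_n$ (even number of $1$'s) and $V_n$ (odd number of $1$'s) and edge set $E_n$ of pairs $ij$ ($i\in U_n$, $j\in V_n$, $j=i\#k$ for some $k<n$); $\mathcal N(x)$ is the set of neighbors of $x$. $\Delta_{n-1}=\{[t_0,\dots,t_{n-1}]\mid t_k\ge0,\sum t_k=1\}$. For $c:E_n\to\mathbb C$, $U_n(c)$, $V_n(c)$ are the vertices of $U_n$, $V_n$ incident to some edge with nonzero weight; $c$ is admissible if $\sum_{i\in\mathcal N(j_1)\cap\mathcal N(j_2)}c(ij_1)\overline{c(ij_2)}=\delta_{j_1j_2}$ for all $j_1,j_2\in V_n(c)$ and $\sum_{j\in\mathcal N(i_1)\cap\mathcal N(i_2)}c(i_1j)\overline{c(i_2j)}=\delta_{i_1i_2}$ for all $i_1,i_2\in U_n(c)$. *)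

From HB Require Import structures.
From mathcomp Require Import all_boot all_order all_algebra.
Set Implicit Arguments. Unset Strict Implicit. Unset Printing Implicit Defensive.
Import Order.TTheory GRing.Theory Num.Theory.
Local Open Scope ring_scope.

Definition vert (n : nat) := {ffun 'I_n -> bool}.

Definition flip n (i : vert n) (k : 'I_n) : vert n :=
  [ffun m => if m == k then ~~ i m else i m].

Definition inU n (i : vert n) : bool := ~~ odd #|[set m | i m]|.
Definition inV n (j : vert n) : bool := odd #|[set m | j m]|.

Definition is_edge n (i j : vert n) : bool :=
  inU i && [exists k, j == flip i k].

Definition nbr n (x : vert n) : {set vert n} := [set y | [exists k, y == flip x k]].

(* an edge weighting c : E_n -> C is given as a function on pairs of vertices;
   only its values on edges (i,j), i in U_n, are ever used. *)
Definition Uc (C : numClosedFieldType) n (c : vert n -> vert n -> C) : {set vert n} :=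
  [set i | inU i && [exists j, is_edge i j && (c i j != 0)]].
Definition Vc (C : numClosedFieldType) n (c : vert n -> vert n -> C) : {set vert n} :=
  [set j | inV j && [exists i, is_edge i j && (c i j != 0)]].

Definition admissible (C : numClosedFieldType) n (c : vert n -> vert n -> C) : Prop :=
  (forall j1 j2, j1 \in Vc c -> j2 \in Vc c ->
     \sum_(i in nbr j1 :&: nbr j2) c i j1 * (c i j2)^* = (j1 == j2)%:R) /\
  (forall i1 i2, i1 \in Uc c -> i2 \in Uc c ->
     \sum_(j in nbr i1 :&: nbr i2) c i1 j * (c i2 j)^* = (i1 == i2)%:R).

(* the simplex Delta_{n-1} (points with coordinates in C that are >= 0, hence real) *)
Definition in_simplex (C : numClosedFieldType) n (t : 'I_n -> C) : Prop :=
  (forall k, 0 <= t k) /\ \sum_(k < n) t k = 1.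

(** Opposite edges of every square of [Q_n] carry weights of equal modulus:
    for a square [u, u#a, u#b, u#a#b] with [u] even, orthogonality of the
    columns [u#a], [u#b] and of the rows [u], [u#a#b] of the admissible
    matrix gives [p q = p' q'] and [p q' = p' q] for the four moduli, and
    positivity forces [p = p'], [q = q'].  Hence the modulus of the weight of
    a direction-[k] edge does not change when a vertex is flipped, so it
    depends only on [k], and the unit norm of the row at [0...0] says that
    the squares of these moduli sum to [1]. *)
From HB Require Import structures.
From mathcomp Require Import all_boot all_order all_algebra.
Import Order.TTheory GRing.Theory Num.Theory.
Set Implicit Arguments. Unset Strict Implicit.
Local Open Scope ring_scope.

Section Hypercube.
Variable n : nat.
Implicit Types (u v x y : vert n) (a b k m : 'I_n).

Lemma flipE v k m : flip v k m = if m == k then ~~ v m else v m.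
Proof. by rewrite ffunE. Qed.

Lemma flipK v k : flip (flip v k) k = v.
Proof. by apply/ffunP=> m; rewrite !flipE; case: eqP => // ->; rewrite negbK. Qed.

Lemma flipC v a b : flip (flip v a) b = flip (flip v b) a.
Proof. by apply/ffunP=> m; rewrite !flipE; do 2 case: eqP. Qed.

Lemma flip_inj v a b : flip v a = flip v b -> a = b.
Proof. by move/ffunP/(_ a); rewrite !flipE eqxx; case: eqP => // _; case: (v a). Qed.

Definition ones v : {set 'I_n} := [set m | v m].

Lemma ones_flip v k :
  ones (flip v k) = if v k then ones v :\ k else k |: ones v.
Proof.
by apply/setP=> m; case: ifP => vk; rewrite !inE flipE; case: eqP => // ->; rewrite vk.
Qed.

Lemma inU_flip v k : inU (flip v k) = ~~ inU v.
Proof.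
rewrite /inU negbK (ones_flip v k : [set m | _] = _).
case: ifP => vk; last by rewrite cardsU1 !inE vk /= negbK.
by rewrite (cardsD1 k (ones v)) !inE vk add1n.
Qed.

Lemma inV_inU v : inV v = ~~ inU v.
Proof. by rewrite negbK. Qed.

Definition vert0 : vert n := [ffun => false].

Lemma inU_vert0 : inU vert0.
Proof.
by rewrite /inU (_ : [set m | _] = set0) ?cards0 //; apply/setP=> m; rewrite !inE ffunE.
Qed.

Lemma flip_invariant_const (T : Type) (f : vert n -> T) :
  (forall v k, f (flip v k) = f v) -> forall v, f v = f vert0.
Proof.
move=> f_flip v; move Ev: #|ones v| => N; elim: N v Ev => [|N IHN] v Ev.
  congr f; apply/ffunP=> m; rewrite ffunE; apply/negbTE/negP => vm.
  by move: Ev; rewrite (cardsD1 m) inE vm.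
have [m vm] : exists m, v m.
  case: (pickP v) => [m vm | v0]; first by exists m.
  by move: Ev; rewrite (_ : ones v = set0) ?cards0 //; apply/setP=> m; rewrite !inE v0.
rewrite -(flipK v m) f_flip IHN //.
by move: Ev; rewrite ones_flip vm (cardsD1 m) inE vm add1n => -[].
Qed.

Lemma nbrP x y : reflect (exists k, y = flip x k) (y \in nbr x).
Proof. by rewrite inE; apply: (iffP existsP) => -[k /eqP]; exists k. Qed.

Lemma nbrE x : nbr x = [set flip x k | k : 'I_n].
Proof. by apply/setP=> y; apply/nbrP/imsetP => [[k ->]|[k _ ->]]; exists k. Qed.

Lemma common_nbr x a b : a != b ->
  nbr (flip x a) :&: nbr (flip x b) = [set x; flip (flip x a) b].
Proof.
move=> ab; apply/setP=> y; rewrite in_setI in_set2; apply/andP/orP.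
  case=> /nbrP[k1 ->] /nbrP[k2 /ffunP E].
  have [<-|k1a] := eqVneq a k1; first by left; rewrite flipK.
  have ba : b != a by rewrite eq_sym.
  move: (E a) (E b); rewrite !flipE !eqxx (negbTE ab) (negbTE ba) (negbTE k1a).
  have [<-|_] := eqVneq a k2; last by case: (x a).
  rewrite (negbTE ba); have [<- _ _|_] := eqVneq b k1; first by right.
  by case: (x b).
case=> /eqP ->; first by split; apply/nbrP; [exists a | exists b]; rewrite flipK.
by split; apply/nbrP; [exists b | exists a; rewrite flipC].
Qed.

End Hypercube.

Lemma eq_of_cross_mul (R : numDomainType) (x y x' y' : R) :
  0 < x -> 0 < y -> 0 < x' -> 0 < y' ->
  x * y = x' * y' -> x * y' = x' * y -> x = x' /\ y = y'.
Proof.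
move=> x0 y0 x'0 y'0 e1 e2.
have /eqP : x ^+ 2 = x' ^+ 2.
  apply: (mulIf (lt0r_neq0 (mulr_gt0 y0 y'0))).
  by rewrite !expr2 (mulrACA x x) e1 e2 mulrACA [y' * y]mulrC.
rewrite eqrXn2 ?ltW // => /eqP ex; split => //.
by apply: (mulfI (lt0r_neq0 x0)); rewrite e1 ex.
Qed.

Lemma norm_eq_orth2 (C : numClosedFieldType) (T : finType) (x y : T)
    (F G : T -> C) :
  x != y -> \sum_(i in [set x; y]) F i * (G i)^* = 0 ->
  `|F x| * `|G x| = `|F y| * `|G y|.
Proof.
move=> xy; rewrite big_setU1 ?big_set1 ?inE //= => /eqP; rewrite addr_eq0 => /eqP.
by move/(congr1 Num.norm); rewrite normrN !normrM !norm_conjC.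
Qed.

Section Admissible.
Variables (C : numClosedFieldType) (n : nat) (c : vert n -> vert n -> C).
Hypothesis c_adm : admissible c.
Hypothesis c_neq0 : forall i j, is_edge i j -> c i j != 0.
Implicit Types (u v : vert n) (a b k m : 'I_n).

Lemma is_edge_flip u k : inU u -> is_edge u (flip u k).
Proof. by move=> uU; rewrite /is_edge uU; apply/existsP; exists k. Qed.

Lemma mem_Uc u k : inU u -> u \in Uc c.
Proof.
move=> uU; rewrite inE uU; apply/existsP; exists (flip u k).
by rewrite is_edge_flip ?c_neq0 ?is_edge_flip.
Qed.

Lemma mem_Vc_flip u k : inU u -> flip u k \in Vc c.
Proof.
move=> uU; rewrite inE inV_inU inU_flip negbK uU; apply/existsP; exists u.
by rewrite is_edge_flip ?c_neq0 ?is_edge_flip.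
Qed.

Lemma weight_gt0 u k : inU u -> 0 < `|c u (flip u k)|.
Proof. by move=> uU; rewrite normr_gt0 c_neq0 ?is_edge_flip. Qed.

Definition dir_weight v k :=
  if inU v then `|c v (flip v k)| else `|c (flip v k) v|.

Section Square.
Variables (u : vert n) (a b : 'I_n).
Hypotheses (uU : inU u) (ab : a != b).
Let u' := flip (flip u a) b.

Let u'U : inU u'.
Proof. by rewrite !inU_flip negbK. Qed.

Let u_neq_u' : u != u'.
Proof.
by apply: contra_neq ab => uu'; apply: (@flip_inj _ u); rewrite {2}uu' flipK.
Qed.

Let ua_neq_ub : flip u a != flip u b.
Proof. by apply: contra_neq ab => /flip_inj. Qed.

Lemma square_cols :
  `|c u (flip u a)| * `|c u (flip u b)| = `|c u' (flip u a)| * `|c u' (flip u b)|.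
Proof.
apply: (norm_eq_orth2 (F := c^~ (flip u a)) (G := c^~ (flip u b)) u_neq_u').
have [eV _] := c_adm; rewrite -common_nbr //.
by rewrite eV ?mem_Vc_flip // (negbTE ua_neq_ub).
Qed.

Lemma square_rows :
  `|c u (flip u a)| * `|c u' (flip u a)| = `|c u (flip u b)| * `|c u' (flip u b)|.
Proof.
apply: (norm_eq_orth2 (F := c u) (G := c u') ua_neq_ub).
have [_ eU] := c_adm; have := common_nbr (flip u a) ab; rewrite flipK => <-.
by rewrite eU ?(mem_Uc a) // (negbTE u_neq_u').
Qed.

Lemma dir_weight_flipU : dir_weight (flip u b) a = dir_weight u a.
Proof.
rewrite /dir_weight inU_flip uU /= -flipC -/u'.
have p'_gt0 : 0 < `|c u' (flip u b)|.
  by have := weight_gt0 a u'U; rewrite /u' flipC flipK.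
have q'_gt0 : 0 < `|c u' (flip u a)|.
  by have := weight_gt0 b u'U; rewrite /u' flipK.
by have [->] := eq_of_cross_mul (weight_gt0 a uU) (weight_gt0 b uU) p'_gt0 q'_gt0
  (etrans square_cols (mulrC _ _)) (etrans square_rows (mulrC _ _)).
Qed.

End Square.

Lemma dir_weight_flip v m k : dir_weight (flip v m) k = dir_weight v k.
Proof.
have [<-|mk] := eqVneq m k.
  by rewrite /dir_weight inU_flip flipK; case: inU.
have km : k != m by rewrite eq_sym.
have [vU|vV] := boolP (inU v); first exact: dir_weight_flipU.
by rewrite -[in RHS](flipK v m) (dir_weight_flipU (u := flip v m)) ?inU_flip.
Qed.

Lemma sum_dir_weight_sqr u : (0 < n)%N -> inU u ->
  \sum_(k < n) dir_weight u k ^+ 2 = 1.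
Proof.
move=> n_gt0 uU; have [_ eU] := c_adm.
have := eU _ _ (mem_Uc (Ordinal n_gt0) uU) (mem_Uc (Ordinal n_gt0) uU).
rewrite setIid eqxx mulr1n nbrE big_imset; last by move=> k1 k2 _ _ /flip_inj.
by move=> <-; apply: eq_bigr => k _; rewrite /dir_weight uU normCK.
Qed.

End Admissible.

Theorem lemma5p1 (C : numClosedFieldType) (n : nat) (hn : (1 <= n)%N)
  (c : vert n -> vert n -> C) :
  admissible c ->
  (forall i j, is_edge i j -> c i j != 0) ->
  exists t : 'I_n -> C, in_simplex t /\
    (forall (i j : vert n) (k : 'I_n), is_edge i j -> i = flip j k ->
       `|c i j| = sqrtC (t k)).
Proof.
move=> c_adm c_neq0.
exists (fun k => dir_weight c (vert0 n) k ^+ 2); split.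
  split=> [k|]; first by rewrite exprn_ge0 // /dir_weight; case: inU.
  exact: sum_dir_weight_sqr (inU_vert0 n).
move=> i j k /andP[iU _] eij; move: iU; rewrite {}eij inU_flip => jV.
have -> : `|c (flip j k) j| = dir_weight c j k by rewrite /dir_weight (negbTE jV).
rewrite (flip_invariant_const (f := dir_weight c ^~ k)) => [|v m].
  by rewrite sqrCK // /dir_weight inU_vert0.
exact: dir_weight_flip.
Qed.
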